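(* Let $\rho_1,\rho_2,H_1,H_2,g>0$ with $\rho_1<\rho_2$, and let $l\neq 0$. Consider the system for two smooth functions $\psi_1(t,x,y),\psi_2(t,x,y)$: $$\frac{\partial \omega_i}{\partial t}+[\omega_i,\psi_i]=0,\qquad i=1,2,$$ where $\omega_i=\Delta\psi_i+\epsilon_i(\psi_2-\alpha_i\psi_1)$, $\alpha_1=1$, $\alpha_2=\rho_1/\rho_2$, $\epsilon_i=\dfrac{l^2\rho_i}{(\rho_2-\rho_1)gH_i}$. Then the Lie algebra of (infinitesimal) Lie point symmetries of this system is the seven-dimensional algebra spanned by $$X_1=\partial_x,\ X_2=\partial_y,\ X_3=\partial_t,\ X_4=\partial_{\psi_1},\ X_5=\partial_{\psi_2},\ X_6=y\partial_x-x\partial_y,\ X_7=t\partial_t-\psi_1\partial_{\psi_1}-\psi_2\partial_{\psi_2}.$$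
   Context: $\Delta=\partial_x^2+\partial_y^2$ is the horizontal Laplacian and $[a,b]=\frac{\partial a}{\partial x}\frac{\partial b}{\partial y}-\frac{\partial a}{\partial y}\frac{\partial b}{\partial x}$ is the Jacobian bracket. A Lie point symmetry is a vector field $\xi^t\partial_t+\xi^x\partial_x+\xi^y\partial_y+\eta^1\partial_{\psi_1}+\eta^2\partial_{\psi_2}$ on the space $(t,x,y,\psi_1,\psi_2)$ whose prolongation annihilates the equations on their solution set (infinitesimal invariance criterion). *)

From Stdlib Require Import Reals Lra List Bool ClassicalEpsilon.
Import ListNotations.
Open Scope R_scope.

(** The derivative of a real function at a point, when it exists (else 0). *)
Definition dlim (f : R -> R) (x : R) : R :=
  match excluded_middle_informative (exists l, derivable_pt_lim f x l) with
  | left H => proj1_sig (constructive_indefinite_description _ H)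
  | right _ => 0
  end.

(** * Smooth functions on R^5 (coordinates t, x, y, psi1, psi2) *)
Definition R5fun := R -> R -> R -> R -> R -> R.

Definition upd (q : nat -> R) (k : nat) (s : R) : nat -> R :=
  fun j => if Nat.eqb j k then s else q j.

Definition lift5 (f : R5fun) : (nat -> R) -> R :=
  fun q => f (q 0%nat) (q 1%nat) (q 2%nat) (q 3%nat) (q 4%nat).

Definition PDv (G : (nat -> R) -> R) (k : nat) (q : nat -> R) : R :=
  dlim (fun s => G (upd q k s)) (q k).

Fixpoint iterPDv (G : (nat -> R) -> R) (ks : list nat) : (nat -> R) -> R :=
  match ks with
  | [] => G
  | k :: ks' => PDv (iterPDv G ks') k
  end.

Definition cont5 (G : (nat -> R) -> R) : Prop :=
  forall q eps, 0 < eps -> exists delta, 0 < delta /\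
    forall q', (forall i, (i < 5)%nat -> Rabs (q' i - q i) < delta) ->
      Rabs (G q' - G q) < eps.

Definition Smooth5 (f : R5fun) : Prop :=
  forall ks, Forall (fun k => (k < 5)%nat) ks ->
    (forall k q, (k < 5)%nat ->
       exists l, derivable_pt_lim (fun s => iterPDv (lift5 f) ks (upd q k s)) (q k) l)
    /\ cont5 (iterPDv (lift5 f) ks).

Record VF := mkVF { xi_t : R5fun; xi_x : R5fun; xi_y : R5fun;
                    eta1 : R5fun; eta2 : R5fun }.

Definition SmoothVF (V : VF) : Prop :=
  Smooth5 (xi_t V) /\ Smooth5 (xi_x V) /\ Smooth5 (xi_y V) /\
  Smooth5 (eta1 V) /\ Smooth5 (eta2 V).

Definition c0 : R5fun := fun _ _ _ _ _ => 0.
Definition c1 : R5fun := fun _ _ _ _ _ => 1.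
Definition X1 : VF := mkVF c0 c1 c0 c0 c0.
Definition X2 : VF := mkVF c0 c0 c1 c0 c0.
Definition X3 : VF := mkVF c1 c0 c0 c0 c0.
Definition X4 : VF := mkVF c0 c0 c0 c1 c0.
Definition X5 : VF := mkVF c0 c0 c0 c0 c1.
Definition X6 : VF := mkVF c0 (fun t x y p1 p2 => y) (fun t x y p1 p2 => - x) c0 c0.
Definition X7 : VF := mkVF (fun t x y p1 p2 => t) c0 c0
                           (fun t x y p1 p2 => - p1) (fun t x y p1 p2 => - p2).

Definition Xs : list VF := [X1; X2; X3; X4; X5; X6; X7].

Definition IsLinComb (V : VF) (c : list R) : Prop :=
  length c = 7%nat /\
  forall t x y p1 p2,
    let comb (sel : VF -> R5fun) :=
        fold_right Rplus 0 (map (fun '(ck, Xk) => ck * sel Xk t x y p1 p2) (combine c Xs)) in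
    xi_t V t x y p1 p2 = comb xi_t /\ xi_x V t x y p1 p2 = comb xi_x /\
    xi_y V t x y p1 p2 = comb xi_y /\ eta1 V t x y p1 p2 = comb eta1 /\
    eta2 V t x y p1 p2 = comb eta2.

Definition InSpanX (V : VF) : Prop := exists c, IsLinComb V c.

Definition zeroVF : VF := mkVF c0 c0 c0 c0 c0.

Definition XsLinIndep : Prop :=
  forall c, IsLinComb zeroVF c -> Forall (fun ck => ck = 0) c.

(** * Jet space J^4 over (t,x,y) with dependent variables psi1 (a=0), psi2 (a=1).
    Multi-index (n0,n1,n2) = numbers of derivatives in t, x, y. *)
Definition MI := (nat * nat * nat)%type.
Record JP := mkJP { jb : nat -> R ;            (* 0 = t, 1 = x, 2 = y *)
                    ju : nat -> MI -> R }.     (* ju a J = d^J psi_(a+1) *)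

Definition mi_eqb (J K : MI) : bool :=
  let '(a,b,c) := J in let '(a',b',c') := K in
  (Nat.eqb a a' && Nat.eqb b b' && Nat.eqb c c')%bool.
Definition mi_add (J K : MI) : MI :=
  let '(a,b,c) := J in let '(a',b',c') := K in (a+a', b+b', c+c')%nat.
Definition ei (i : nat) : MI :=
  match i with 0 => (1,0,0) | 1 => (0,1,0) | _ => (0,0,1) end%nat.
Definition addi (J : MI) (i : nat) : MI := mi_add J (ei i).

Definition mi_upto (n : nat) : list MI :=
  flat_map (fun n0 => flat_map (fun n1 =>
     map (fun n2 => (n0,n1,n2)) (seq 0 (S (n - n0 - n1)))) (seq 0 (S (n - n0))))
   (seq 0 (S n)).

Definition sumL {A} (l : list A) (f : A -> R) : R := fold_right (fun a s => f a + s) 0 l.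

Definition setb (p : JP) (i : nat) (s : R) : JP :=
  mkJP (fun j => if Nat.eqb j i then s else jb p j) (ju p).
Definition setu (p : JP) (a : nat) (J : MI) (s : R) : JP :=
  mkJP (jb p) (fun a' J' => if (Nat.eqb a' a && mi_eqb J' J)%bool then s else ju p a' J').

Definition PDb (F : JP -> R) (i : nat) (p : JP) : R :=
  dlim (fun s => F (setb p i s)) (jb p i).
Definition PDu (F : JP -> R) (a : nat) (J : MI) (p : JP) : R :=
  dlim (fun s => F (setu p a J s)) (ju p a J).

(** total derivative D_i (exact on differential functions of order <= 3) *)
Definition TD (i : nat) (F : JP -> R) : JP -> R := fun p =>
  PDb F i p + sumL [0;1]%nat (fun a => sumL (mi_upto 3) (fun J =>
                  ju p a (addi J i) * PDu F a J p)).

Definition TDJ (J : MI) (F : JP -> R) : JP -> R :=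
  let '(n0,n1,n2) := J in
  Nat.iter n0 (TD 0) (Nat.iter n1 (TD 1) (Nat.iter n2 (TD 2) F)).

Definition liftJ (f : R5fun) : JP -> R := fun p =>
  f (jb p 0) (jb p 1) (jb p 2) (ju p 0 (0,0,0)%nat) (ju p 1 (0,0,0)%nat).

Definition xiJ (V : VF) (i : nat) : JP -> R :=
  liftJ (match i with 0 => xi_t V | 1 => xi_x V | _ => xi_y V end)%nat.
Definition etaJ (V : VF) (a : nat) : JP -> R :=
  liftJ (match a with 0 => eta1 V | _ => eta2 V end)%nat.

Definition Qchar (V : VF) (a : nat) : JP -> R := fun p =>
  etaJ V a p - sumL [0;1;2]%nat (fun i => xiJ V i p * ju p a (ei i)).

Definition prolcoef (V : VF) (a : nat) (J : MI) : JP -> R := fun p =>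
  TDJ J (Qchar V a) p + sumL [0;1;2]%nat (fun i => xiJ V i p * ju p a (addi J i)).

Definition prV (V : VF) (F : JP -> R) : JP -> R := fun p =>
  sumL [0;1;2]%nat (fun i => xiJ V i p * PDb F i p) +
  sumL [0;1]%nat (fun a => sumL (mi_upto 3) (fun J => prolcoef V a J p * PDu F a J p)).

Definition epsi (rho1 rho2 g l rhoi Hi : R) : R :=
  l ^ 2 * rhoi / ((rho2 - rho1) * g * Hi).

Definition omegaD (eps alpha : R) (a : nat) (J0 : MI) (p : JP) : R :=
  ju p a (mi_add J0 (0,2,0)%nat) + ju p a (mi_add J0 (0,0,2)%nat)
  + eps * (ju p 1 J0 - alpha * ju p 0 J0).

(** omega_t + [omega, psi] with [a,b] = a_x b_y - a_y b_x *)
Definition EqA (eps alpha : R) (a : nat) (p : JP) : R :=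
  omegaD eps alpha a (1,0,0)%nat p
  + omegaD eps alpha a (0,1,0)%nat p * ju p a (0,0,1)%nat
  - omegaD eps alpha a (0,0,1)%nat p * ju p a (0,1,0)%nat.

Definition Eq1 (rho1 rho2 H1 H2 g l : R) : JP -> R :=
  EqA (epsi rho1 rho2 g l rho1 H1) 1 0.
Definition Eq2 (rho1 rho2 H1 H2 g l : R) : JP -> R :=
  EqA (epsi rho1 rho2 g l rho2 H2) (rho1 / rho2) 1.

Definition IsLieSym (rho1 rho2 H1 H2 g l : R) (V : VF) : Prop :=
  forall p, Eq1 rho1 rho2 H1 H2 g l p = 0 -> Eq2 rho1 rho2 H1 H2 g l p = 0 ->
    prV V (Eq1 rho1 rho2 H1 H2 g l) p = 0 /\ prV V (Eq2 rho1 rho2 H1 H2 g l) p = 0.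

From Pilot Require Import Defs.
From Stdlib Require Import Reals List Lra Lia FunctionalExtensionality ClassicalEpsilon.
Import ListNotations.
Open Scope R_scope.

(* pr^(3) V Eq_i is a polynomial in the jet coordinates whose coefficients are
   derivatives of the components of V.  Evaluating it at finitely many sparse
   jet points on the solution variety gives linear relations between these
   derivatives (the determining equations).  Comparing the third-order
   relations of the two layers gives eps_2 (alpha_2 - 1) d_t xi^x = 0 and
   similar identities; since eps_i <> 0 and alpha_2 = rho1/rho2 <> 1, every
   component of V is affine, with exactly the seven free constants of
   X_1, ..., X_7.  Conversely, for V = sum k_i X_i one finds
   pr^(3) V Eq_i = -2 k_7 Eq_i, which vanishes on solutions. *)

Lemma dlim_eq f x l : derivable_pt_lim f x l -> dlim f x = l.
Proof.
  intro H. unfold dlim. destruct excluded_middle_informative as [e|n].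
  - destruct (constructive_indefinite_description _ e) as [l' Hl']. simpl.
    eapply uniqueness_limite; eauto.
  - exfalso; apply n; eauto.
Qed.

Lemma derivable_pt_lim_eq f x l l' :
  derivable_pt_lim f x l -> l = l' -> derivable_pt_lim f x l'.
Proof. intros H ->; exact H. Qed.

Lemma derivable_pt_lim_constant (f : R -> R) x c :
  (forall s, f s = c) -> derivable_pt_lim f x 0.
Proof.
  intro H. replace f with (fun _ : R => c) by (extensionality s; auto).
  apply derivable_pt_lim_const.
Qed.

Lemma derivable_pt_lim_affine (f : R -> R) a x :
  (forall s, f s = f 0 + a * s) -> derivable_pt_lim f x a.
Proof.
  intro H. replace f with (fun s => f 0 + a * s) by (extensionality s; auto).
  apply (derivable_pt_lim_eq _ _ (0 + (0 * x + a * 1))); [|ring].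
  apply (derivable_pt_lim_plus (fun _ => f 0)); [apply derivable_pt_lim_const|].
  apply (derivable_pt_lim_mult (fun _ => a) id);
    [apply derivable_pt_lim_const | apply derivable_pt_lim_id].
Qed.

Lemma derivable_pt_lim_plus_fun (f g : R -> R) x l1 l2 :
  derivable_pt_lim f x l1 -> derivable_pt_lim g x l2 ->
  derivable_pt_lim (fun s => f s + g s) x (l1 + l2).
Proof. intros; apply (derivable_pt_lim_plus f g); auto. Qed.

Lemma derivable_pt_lim_mult_fun (f g : R -> R) x l1 l2 :
  derivable_pt_lim f x l1 -> derivable_pt_lim g x l2 ->
  derivable_pt_lim (fun s => f s * g s) x (l1 * g x + f x * l2).
Proof. intros; apply (derivable_pt_lim_mult f g); auto. Qed.

Definition vec5 (t x y u v : R) : nat -> R :=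
  fun i => match i with 0 => t | 1 => x | 2 => y | 3 => u | _ => v end%nat.

Definition Dk (k : nat) (f : R5fun) : R5fun :=
  if Nat.ltb k 5 then fun t x y u v => PDv (lift5 f) k (vec5 t x y u v) else c0.

Arguments Dk : simpl never.

(* [Dks [k1; ...; kn] f] differentiates first in kn, last in k1. *)
Fixpoint Dks (K : list nat) (f : R5fun) : R5fun :=
  match K with [] => f | k :: K' => Dk k (Dks K' f) end.

Definition depends_on5 (G : (nat -> R) -> R) : Prop :=
  forall q q', (forall i, (i < 5)%nat -> q i = q' i) -> G q = G q'.

Lemma depends_on5_lift5 f : depends_on5 (lift5 f).
Proof. intros q q' H. unfold lift5. rewrite !H by lia. reflexivity. Qed.

Lemma depends_on5_PDv G k : depends_on5 G -> (k < 5)%nat -> depends_on5 (PDv G k).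
Proof.
  intros HG Hk q q' H. unfold PDv. rewrite (H k Hk).
  f_equal. extensionality s. apply HG. intros i Hi. unfold upd.
  destruct (Nat.eqb i k); auto.
Qed.

Lemma vec5_lift q i : (i < 5)%nat ->
  vec5 (q 0%nat) (q 1%nat) (q 2%nat) (q 3%nat) (q 4%nat) i = q i.
Proof. intros Hi. destruct i as [|[|[|[|[|i]]]]]; simpl; auto. lia. Qed.

Lemma lift5_Dk f k q : (k < 5)%nat -> lift5 (Dk k f) q = PDv (lift5 f) k q.
Proof.
  intros Hk. change (lift5 (Dk k f) q)
    with (Dk k f (q 0%nat) (q 1%nat) (q 2%nat) (q 3%nat) (q 4%nat)).
  unfold Dk. destruct (Nat.ltb_spec k 5); [|lia].
  apply depends_on5_PDv; [apply depends_on5_lift5|auto|]. apply vec5_lift.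
Qed.

Lemma Dk_ge5 f k : (5 <= k)%nat -> Dk k f = c0.
Proof.
  intro. unfold Dk. replace (Nat.ltb k 5) with false; auto.
  symmetry; apply Nat.ltb_ge; lia.
Qed.

Lemma iterPDv_lift5_Dk f k ks : (k < 5)%nat -> Forall (fun k => (k < 5)%nat) ks ->
  iterPDv (lift5 (Dk k f)) ks = iterPDv (lift5 f) (ks ++ [k]).
Proof.
  intros Hk. induction ks as [|k' ks IH]; intros Hks; simpl.
  - extensionality q. apply lift5_Dk, Hk.
  - inversion Hks; subst. rewrite IH; auto.
Qed.

Lemma iterPDv_c0 ks : iterPDv (lift5 c0) ks = fun _ => 0.
Proof.
  induction ks as [|k ks IH]; simpl.
  - extensionality q. reflexivity.
  - rewrite IH. extensionality q. apply dlim_eq, derivable_pt_lim_const.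
Qed.

Lemma Smooth5_c0 : Smooth5 c0.
Proof.
  intros ks Hks. rewrite iterPDv_c0. split.
  - intros k q Hk. exists 0. apply derivable_pt_lim_const.
  - intros q eps Heps. exists 1. split; [lra|].
    intros. rewrite Rminus_diag, Rabs_R0. auto.
Qed.

Lemma Smooth5_Dk f k : Smooth5 f -> Smooth5 (Dk k f).
Proof.
  intros Hf. destruct (Nat.ltb_spec k 5) as [Hk|Hk].
  - intros ks Hks. rewrite iterPDv_lift5_Dk by auto. apply Hf.
    apply Forall_app; split; auto.
  - rewrite Dk_ge5 by lia. apply Smooth5_c0.
Qed.

Lemma Smooth5_Dks f K : Smooth5 f -> Smooth5 (Dks K f).
Proof. intros Hf; induction K; simpl; auto using Smooth5_Dk. Qed.

Lemma Smooth5_derivable f k q : Smooth5 f -> (k < 5)%nat ->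
  derivable_pt_lim (fun s => lift5 f (upd q k s)) (q k) (lift5 (Dk k f) q).
Proof.
  intros Hf Hk. destruct (proj1 (Hf [] (Forall_nil _)) k q Hk) as [l Hl].
  simpl in Hl. apply (derivable_pt_lim_eq _ _ _ _ Hl).
  rewrite lift5_Dk by auto. symmetry. apply dlim_eq, Hl.
Qed.

Section SmoothCoordinates.
Variable f : R5fun.
Hypothesis Hf : Smooth5 f.
Lemma Smooth5_derivable_t t x y u v :
  derivable_pt_lim (fun s => f s x y u v) t (Dk 0 f t x y u v).
Proof. exact (Smooth5_derivable f 0 (vec5 t x y u v) Hf ltac:(lia)). Qed.
Lemma Smooth5_derivable_x t x y u v :
  derivable_pt_lim (fun s => f t s y u v) x (Dk 1 f t x y u v).
Proof. exact (Smooth5_derivable f 1 (vec5 t x y u v) Hf ltac:(lia)). Qed.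
Lemma Smooth5_derivable_y t x y u v :
  derivable_pt_lim (fun s => f t x s u v) y (Dk 2 f t x y u v).
Proof. exact (Smooth5_derivable f 2 (vec5 t x y u v) Hf ltac:(lia)). Qed.
Lemma Smooth5_derivable_u t x y u v :
  derivable_pt_lim (fun s => f t x y s v) u (Dk 3 f t x y u v).
Proof. exact (Smooth5_derivable f 3 (vec5 t x y u v) Hf ltac:(lia)). Qed.
Lemma Smooth5_derivable_v t x y u v :
  derivable_pt_lim (fun s => f t x y u s) v (Dk 4 f t x y u v).
Proof. exact (Smooth5_derivable f 4 (vec5 t x y u v) Hf ltac:(lia)). Qed.
End SmoothCoordinates.

Lemma R5fun_ext (f g : R5fun) :
  (forall t x y u v, f t x y u v = g t x y u v) -> f = g.
Proof.
  intros H. extensionality t; extensionality x; extensionality y;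
    extensionality u; extensionality v. apply H.
Qed.

Lemma upd_same q k : upd q k (q k) = q.
Proof. extensionality i. unfold upd. destruct (Nat.eqb_spec i k); subst; auto. Qed.

Lemma upd_eq q k s : upd q k s k = s.
Proof. unfold upd. rewrite Nat.eqb_refl. auto. Qed.

Lemma upd_neq q k j s : j <> k -> upd q k s j = q j.
Proof. intro. unfold upd. destruct (Nat.eqb_spec j k); auto; lia. Qed.

Lemma upd_upd_same q k r s : upd (upd q k r) k s = upd q k s.
Proof. extensionality i. unfold upd. destruct (Nat.eqb i k); auto. Qed.

Lemma upd_upd_comm q k j r s : k <> j -> upd (upd q k r) j s = upd (upd q j s) k r.
Proof.
  intro H. extensionality i. unfold upd.
  destruct (Nat.eqb_spec i j), (Nat.eqb_spec i k); subst; auto. lia.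
Qed.

Definition independent (k : nat) (f : R5fun) : Prop :=
  forall q s, lift5 f (upd q k s) = lift5 f q.

Lemma Dk_independent f k : independent k f -> Dk k f = c0.
Proof.
  intros Hi. apply R5fun_ext. intros t x y u v.
  destruct (Nat.ltb_spec k 5) as [Hk|Hk]; [|rewrite Dk_ge5 by lia; reflexivity].
  change (lift5 (Dk k f) (vec5 t x y u v) = 0). rewrite lift5_Dk by auto.
  apply dlim_eq, (derivable_pt_lim_constant _ _ (lift5 f (vec5 t x y u v))).
  intro s. apply Hi.
Qed.

Lemma Dk_c0 k : Dk k c0 = c0.
Proof. apply Dk_independent. intros q s. reflexivity. Qed.

Lemma independent_Dk f k j : independent k f -> independent k (Dk j f).
Proof.
  intros Hi q s. destruct (Nat.eq_dec j k) as [->|Hjk].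
  - rewrite Dk_independent by auto. reflexivity.
  - destruct (Nat.ltb_spec j 5) as [Hj|Hj]; [|rewrite Dk_ge5 by lia; reflexivity].
    rewrite !lift5_Dk by auto. unfold PDv. rewrite upd_neq by auto. f_equal.
    extensionality r. rewrite <- upd_upd_comm by auto. apply Hi.
Qed.

Lemma independent_Dks f k K : independent k f -> independent k (Dks K f).
Proof. intros Hi; induction K; simpl; auto using independent_Dk. Qed.

Lemma independent_scale g h k a :
  (forall t x y u v, g t x y u v = a * h t x y u v) -> independent k h -> independent k g.
Proof. intros H Hi q s. unfold lift5. rewrite !H. apply (f_equal (Rmult a)), Hi. Qed.

(* Mean value theorem along the k-th coordinate line through q. *)
Lemma lift5_upd_affine f k q c : Smooth5 f -> (k < 5)%nat ->
  (forall r, lift5 (Dk k f) (upd q k r) = c) ->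
  forall s, lift5 f (upd q k s) = lift5 f q + c * (s - q k).
Proof.
  intros Hf Hk Hc s.
  set (g := fun r => lift5 f (upd q k r)).
  assert (Hd : forall r, derivable_pt_lim g r c).
  { intro r. pose proof (Smooth5_derivable f k (upd q k r) Hf Hk) as H.
    rewrite upd_eq, Hc in H. unfold g.
    replace (fun r0 => lift5 f (upd q k r0))
      with (fun s0 => lift5 f (upd (upd q k r) k s0)); auto.
    extensionality s0. rewrite upd_upd_same; auto. }
  change (lift5 f (upd q k s)) with (g s).
  replace (lift5 f q) with (g (q k)) by (unfold g; rewrite upd_same; auto).
  destruct (Rtotal_order (q k) s) as [Hlt|[Heq|Hgt]].
  - destruct (MVT_cor2 g (fun _ => c) (q k) s Hlt (fun r _ => Hd r)) as [z [Hz _]]. lra.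
  - subst. ring.
  - destruct (MVT_cor2 g (fun _ => c) s (q k) Hgt (fun r _ => Hd r)) as [z [Hz _]]. lra.
Qed.

Lemma independent_of_Dk f k : Smooth5 f -> (k < 5)%nat -> Dk k f = c0 -> independent k f.
Proof.
  intros Hf Hk H q s. rewrite (lift5_upd_affine f k q 0 Hf Hk); [ring|].
  intro. rewrite H. reflexivity.
Qed.

Lemma independent_all_const g : (forall k, (k < 5)%nat -> independent k g) ->
  forall t x y u v, g t x y u v = g 0 0 0 0 0.
Proof.
  intros H t x y u v.
  transitivity (g 0 x y u v). { symmetry. exact (H 0%nat ltac:(lia) (vec5 t x y u v) 0). }
  transitivity (g 0 0 y u v). { symmetry. exact (H 1%nat ltac:(lia) (vec5 0 x y u v) 0). }
  transitivity (g 0 0 0 u v). { symmetry. exact (H 2%nat ltac:(lia) (vec5 0 0 y u v) 0). }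
  transitivity (g 0 0 0 0 v). { symmetry. exact (H 3%nat ltac:(lia) (vec5 0 0 0 u v) 0). }
  symmetry. exact (H 4%nat ltac:(lia) (vec5 0 0 0 0 v) 0).
Qed.

Lemma affine_of_const_Dk g a0 a1 a2 a3 a4 : Smooth5 g ->
  Dk 0 g = (fun _ _ _ _ _ => a0) -> Dk 1 g = (fun _ _ _ _ _ => a1) ->
  Dk 2 g = (fun _ _ _ _ _ => a2) -> Dk 3 g = (fun _ _ _ _ _ => a3) ->
  Dk 4 g = (fun _ _ _ _ _ => a4) ->
  forall t x y u v, g t x y u v = g 0 0 0 0 0 + a0 * t + a1 * x + a2 * y + a3 * u + a4 * v.
Proof.
  intros Hg H0 H1 H2 H3 H4 t x y u v.
  pose proof (lift5_upd_affine g 0 (vec5 0 x y u v) a0 Hg ltac:(lia)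
                ltac:(intro; rewrite H0; reflexivity) t) as S0.
  pose proof (lift5_upd_affine g 1 (vec5 0 0 y u v) a1 Hg ltac:(lia)
                ltac:(intro; rewrite H1; reflexivity) x) as S1.
  pose proof (lift5_upd_affine g 2 (vec5 0 0 0 u v) a2 Hg ltac:(lia)
                ltac:(intro; rewrite H2; reflexivity) y) as S2.
  pose proof (lift5_upd_affine g 3 (vec5 0 0 0 0 v) a3 Hg ltac:(lia)
                ltac:(intro; rewrite H3; reflexivity) u) as S3.
  pose proof (lift5_upd_affine g 4 (vec5 0 0 0 0 0) a4 Hg ltac:(lia)
                ltac:(intro; rewrite H4; reflexivity) v) as S4.
  change (g t x y u v = g 0 x y u v + a0 * (t - 0)) in S0.
  change (g 0 x y u v = g 0 0 y u v + a1 * (x - 0)) in S1.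
  change (g 0 0 y u v = g 0 0 0 u v + a2 * (y - 0)) in S2.
  change (g 0 0 0 u v = g 0 0 0 0 v + a3 * (u - 0)) in S3.
  change (g 0 0 0 0 v = g 0 0 0 0 0 + a4 * (v - 0)) in S4.
  lra.
Qed.
(** * Differential expressions *)

(* Polynomials in the jet coordinates whose coefficients are constants or
   partial derivatives [Dks K (env c)] of the component [c] of the vector
   field, evaluated at the base point (t, x, y, psi1, psi2). *)
Inductive dexp :=
| DZero
| DConst (r : R)
| DCoef (c : nat) (K : list nat)
| DJet (a : nat) (J : MI)
| DAdd (e1 e2 : dexp)
| DMul (e1 e2 : dexp).

Notation MI0 := ((0,0,0)%nat : MI).

Fixpoint deval (env : nat -> R5fun) (e : dexp) (p : JP) : R :=
  match e with
  | DZero => 0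
  | DConst r => r
  | DCoef c K => Dks K (env c) (jb p 0) (jb p 1) (jb p 2) (ju p 0 MI0) (ju p 1 MI0)
  | DJet a J => ju p a J
  | DAdd e1 e2 => deval env e1 p + deval env e2 p
  | DMul e1 e2 => deval env e1 p * deval env e2 p
  end.

Definition dadd (e1 e2 : dexp) : dexp :=
  match e1 with DZero => e2 | _ => match e2 with DZero => e1 | _ => DAdd e1 e2 end end.
Definition dmul (e1 e2 : dexp) : dexp :=
  match e1 with DZero => DZero | _ => match e2 with DZero => DZero | _ => DMul e1 e2 end end.

Lemma deval_dadd env e1 e2 p : deval env (dadd e1 e2) p = deval env e1 p + deval env e2 p.
Proof. destruct e1, e2; simpl; ring. Qed.
Lemma deval_dmul env e1 e2 p : deval env (dmul e1 e2) p = deval env e1 p * deval env e2 p.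
Proof. destruct e1, e2; simpl; ring. Qed.

Definition dsum {A} (l : list A) (f : A -> dexp) : dexp :=
  fold_right (fun x acc => dadd (f x) acc) DZero l.

Lemma deval_dsum {A} env (l : list A) f p :
  deval env (dsum l f) p = sumL l (fun x => deval env (f x) p).
Proof. induction l; simpl; auto. rewrite deval_dadd, IHl; auto. Qed.

Lemma sumL_ext {A} (l : list A) f g : (forall x, f x = g x) -> sumL l f = sumL l g.
Proof. intros H; induction l; simpl; auto. rewrite H, IHl; auto. Qed.

Lemma sumL_ext_in {A} (l : list A) f g :
  (forall x, In x l -> f x = g x) -> sumL l f = sumL l g.
Proof.
  intros H; induction l; simpl; auto.
  rewrite H, IHl; simpl; auto. intros; apply H; simpl; auto.
Qed.

Fixpoint ddiff_base (i : nat) (e : dexp) : dexp :=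
  match e with
  | DZero | DConst _ | DJet _ _ => DZero
  | DCoef c K => DCoef c (i :: K)
  | DAdd e1 e2 => dadd (ddiff_base i e1) (ddiff_base i e2)
  | DMul e1 e2 => dadd (dmul (ddiff_base i e1) e2) (dmul e1 (ddiff_base i e2))
  end.

(* The coefficients depend on psi_(a,0) through the coordinates 3 and 4. *)
Fixpoint ddiff_jet (a : nat) (J : MI) (e : dexp) : dexp :=
  match e with
  | DZero | DConst _ => DZero
  | DCoef c K => if mi_eqb J MI0 then
                   match a with 0 => DCoef c (3 :: K) | 1 => DCoef c (4 :: K) | _ => DZero end%nat
                 else DZero
  | DJet a' J' => if (Nat.eqb a' a && mi_eqb J' J)%bool then DConst 1 else DZero
  | DAdd e1 e2 => dadd (ddiff_jet a J e1) (ddiff_jet a J e2)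
  | DMul e1 e2 => dadd (dmul (ddiff_jet a J e1) e2) (dmul e1 (ddiff_jet a J e2))
  end.

Lemma mi_eqb_spec J K : mi_eqb J K = true <-> J = K.
Proof.
  destruct J as [[a b] c], K as [[a' b'] c']; simpl.
  rewrite !Bool.andb_true_iff, !Nat.eqb_eq. split.
  - intros [[-> ->] ->]; auto.
  - intro H; inversion H; auto.
Qed.

Lemma setb_same p i : setb p i (jb p i) = p.
Proof.
  destruct p as [b u]; unfold setb; simpl. f_equal. extensionality j.
  destruct (Nat.eqb_spec j i); subst; auto.
Qed.

Lemma setu_same p a J : setu p a J (ju p a J) = p.
Proof.
  destruct p as [b u]; unfold setu; simpl. f_equal.
  extensionality a'. extensionality J'.
  destruct (Nat.eqb_spec a' a); simpl; auto.
  destruct (mi_eqb J' J) eqn:E; auto. apply mi_eqb_spec in E. subst; auto.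
Qed.

Lemma ju_setu_other p a J s a' J' :
  ~ (a' = a /\ J' = J) -> ju (setu p a J s) a' J' = ju p a' J'.
Proof.
  intro H. unfold setu; simpl. destruct (Nat.eqb_spec a' a); simpl; auto.
  destruct (mi_eqb J' J) eqn:E; auto. apply mi_eqb_spec in E. tauto.
Qed.

Definition smooth_env (env : nat -> R5fun) : Prop := forall c, Smooth5 (env c).

Lemma ddiff_base_correct env e i p : smooth_env env -> (i < 3)%nat ->
  derivable_pt_lim (fun s => deval env e (setb p i s)) (jb p i)
    (deval env (ddiff_base i e) p).
Proof.
  intros Henv Hi. induction e; simpl.
  - apply (derivable_pt_lim_constant _ _ 0); auto.
  - apply (derivable_pt_lim_constant _ _ r); auto.
  - pose proof (Smooth5_Dks (env c) K (Henv c)) as Hs.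
    destruct i as [|[|[|i]]]; [| | |lia]; simpl.
    + apply (Smooth5_derivable_t _ Hs).
    + apply (Smooth5_derivable_x _ Hs).
    + apply (Smooth5_derivable_y _ Hs).
  - apply (derivable_pt_lim_constant _ _ (ju p a J)); auto.
  - eapply derivable_pt_lim_eq; [apply derivable_pt_lim_plus_fun; eauto|].
    rewrite deval_dadd; auto.
  - eapply derivable_pt_lim_eq; [apply derivable_pt_lim_mult_fun; eauto|].
    rewrite deval_dadd, !deval_dmul, setb_same. ring.
Qed.

Lemma ddiff_jet_correct env e a J p : smooth_env env -> (a < 2)%nat ->
  derivable_pt_lim (fun s => deval env e (setu p a J s)) (ju p a J)
    (deval env (ddiff_jet a J e) p).
Proof.
  intros Henv Ha. induction e; cbn [deval ddiff_jet].
  - apply (derivable_pt_lim_constant _ _ 0); auto.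
  - apply (derivable_pt_lim_constant _ _ r); auto.
  - pose proof (Smooth5_Dks (env c) K (Henv c)) as Hs.
    destruct (mi_eqb J MI0) eqn:EJ.
    + apply mi_eqb_spec in EJ; subst J.
      destruct a as [|[|a]]; [| |lia]; simpl.
      * apply (Smooth5_derivable_u _ Hs).
      * apply (Smooth5_derivable_v _ Hs).
    + apply (derivable_pt_lim_constant _ _ (deval env (DCoef c K) p)).
      intro s. assert (J <> MI0) by (intro; subst; simpl in EJ; discriminate).
      cbn [deval]. rewrite !ju_setu_other by (intros [? ?]; congruence). reflexivity.
  - destruct (Nat.eqb a0 a && mi_eqb J0 J)%bool eqn:E; simpl.
    + apply Bool.andb_true_iff in E. destruct E as [E1 E2].
      apply Nat.eqb_eq in E1. apply mi_eqb_spec in E2. subst.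
      rewrite Nat.eqb_refl.
      replace (mi_eqb J J) with true by (symmetry; apply mi_eqb_spec; auto).
      apply derivable_pt_lim_id.
    + apply (derivable_pt_lim_constant _ _ (ju p a0 J0)). intro s. simpl. rewrite E. reflexivity.
  - eapply derivable_pt_lim_eq; [apply derivable_pt_lim_plus_fun; eauto|].
    rewrite deval_dadd; auto.
  - eapply derivable_pt_lim_eq; [apply derivable_pt_lim_mult_fun; eauto|].
    rewrite deval_dadd, !deval_dmul, setu_same. ring.
Qed.

Lemma PDb_deval env e i p : smooth_env env -> (i < 3)%nat ->
  PDb (deval env e) i p = deval env (ddiff_base i e) p.
Proof. intros. apply dlim_eq, ddiff_base_correct; auto. Qed.

Lemma PDu_deval env e a J p : smooth_env env -> (a < 2)%nat ->
  PDu (deval env e) a J p = deval env (ddiff_jet a J e) p.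
Proof. intros. apply dlim_eq, ddiff_jet_correct; auto. Qed.

Definition dtotal (i : nat) (e : dexp) : dexp :=
  dadd (ddiff_base i e)
    (dsum [0;1]%nat (fun a => dsum (mi_upto 3) (fun J =>
       dmul (DJet a (addi J i)) (ddiff_jet a J e)))).

Lemma deval_dtotal env e i p : smooth_env env -> (i < 3)%nat ->
  deval env (dtotal i e) p = TD i (deval env e) p.
Proof.
  intros Henv Hi. unfold dtotal, TD. rewrite deval_dadd, PDb_deval by auto. f_equal.
  rewrite deval_dsum. apply sumL_ext_in. intros a Ha. rewrite deval_dsum.
  apply sumL_ext. intro J. rewrite deval_dmul, PDu_deval; auto.
  simpl in Ha. destruct Ha as [<-|[<-|[]]]; lia.
Qed.

Lemma deval_iter_dtotal env e i n : smooth_env env -> (i < 3)%nat ->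
  deval env (Nat.iter n (dtotal i) e) = Nat.iter n (TD i) (deval env e).
Proof.
  intros Henv Hi. induction n; simpl; auto.
  rewrite <- IHn. extensionality p. apply deval_dtotal; auto.
Qed.

Definition dtotalJ (J : MI) (e : dexp) : dexp :=
  let '(n0,n1,n2) := J in
  Nat.iter n0 (dtotal 0) (Nat.iter n1 (dtotal 1) (Nat.iter n2 (dtotal 2) e)).

Lemma deval_dtotalJ env e J : smooth_env env -> deval env (dtotalJ J e) = TDJ J (deval env e).
Proof.
  intros Henv. destruct J as [[n0 n1] n2]. simpl.
  rewrite !deval_iter_dtotal by (auto; lia). reflexivity.
Qed.

Definition coefs (V : VF) (c : nat) : R5fun :=
  match c with
  | 0 => xi_t V | 1 => xi_x V | 2 => xi_y V | 3 => eta1 V | 4 => eta2 V | _ => c0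
  end%nat.

Lemma smooth_env_coefs V : SmoothVF V -> smooth_env (coefs V).
Proof.
  intros (H1&H2&H3&H4&H5) c.
  destruct c as [|[|[|[|[|c]]]]]; simpl; auto using Smooth5_c0.
Qed.

Definition dchar (a : nat) : dexp :=
  DAdd (DCoef (3 + a) [])
    (DMul (DConst (-1))
       (DAdd (DMul (DCoef 0 []) (DJet a (ei 0)))
          (DAdd (DMul (DCoef 1 []) (DJet a (ei 1)))
             (DAdd (DMul (DCoef 2 []) (DJet a (ei 2))) DZero)))).

Lemma deval_dchar V a : (a < 2)%nat -> deval (coefs V) (dchar a) = Qchar V a.
Proof.
  intros Ha. extensionality p. destruct a as [|[|a]]; [| |lia];
  unfold Qchar, etaJ, xiJ, liftJ, sumL; simpl; ring.
Qed.

Definition dprolcoef (a : nat) (J : MI) : dexp :=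
  dadd (dtotalJ J (dchar a))
    (dsum [0;1;2]%nat (fun i => dmul (DCoef i []) (DJet a (addi J i)))).

Lemma deval_dprolcoef V a J p : SmoothVF V -> (a < 2)%nat ->
  deval (coefs V) (dprolcoef a J) p = prolcoef V a J p.
Proof.
  intros HV Ha. unfold dprolcoef, prolcoef. rewrite deval_dadd, deval_dsum.
  rewrite deval_dtotalJ by (apply smooth_env_coefs; auto).
  rewrite deval_dchar by auto. f_equal.
Qed.

Definition dprol (e : dexp) : dexp :=
  dadd (dsum [0;1;2]%nat (fun i => dmul (DCoef i []) (ddiff_base i e)))
    (dsum [0;1]%nat (fun a => dsum (mi_upto 3) (fun J =>
       dmul (dprolcoef a J) (ddiff_jet a J e)))).

Lemma deval_dprol V e p : SmoothVF V ->
  deval (coefs V) (dprol e) p = prV V (deval (coefs V) e) p.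
Proof.
  intros HV. pose proof (smooth_env_coefs V HV) as Henv.
  unfold dprol, prV. rewrite deval_dadd, !deval_dsum. f_equal.
  - apply sumL_ext_in. intros i Hi. simpl in Hi.
    rewrite deval_dmul, PDb_deval; auto.
    + destruct Hi as [<-|[<-|[<-|[]]]]; reflexivity.
    + destruct Hi as [<-|[<-|[<-|[]]]]; lia.
  - apply sumL_ext_in. intros a Ha.
    assert (a < 2)%nat by (simpl in Ha; destruct Ha as [<-|[<-|[]]]; lia).
    rewrite deval_dsum. apply sumL_ext. intro J.
    rewrite deval_dmul, PDu_deval, deval_dprolcoef; auto.
Qed.

Definition domegaD (eps alpha : R) (a : nat) (J0 : MI) : dexp :=
  DAdd (DAdd (DJet a (mi_add J0 (0,2,0)%nat)) (DJet a (mi_add J0 (0,0,2)%nat)))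
    (DMul (DConst eps) (DAdd (DJet 1 J0) (DMul (DConst (-1)) (DMul (DConst alpha) (DJet 0 J0))))).

Definition dEqA (eps alpha : R) (a : nat) : dexp :=
  DAdd (DAdd (domegaD eps alpha a (1,0,0)%nat)
           (DMul (domegaD eps alpha a (0,1,0)%nat) (DJet a (0,0,1)%nat)))
    (DMul (DConst (-1)) (DMul (domegaD eps alpha a (0,0,1)%nat) (DJet a (0,1,0)%nat))).

Lemma deval_dEqA env eps alpha a : deval env (dEqA eps alpha a) = EqA eps alpha a.
Proof. extensionality p. unfold EqA, omegaD. simpl. ring. Qed.

Definition LieSymCond (env : nat -> R5fun) (e1 e2 al : R) : Prop :=
  forall p, deval env (dEqA e1 1 0) p = 0 -> deval env (dEqA e2 al 1) p = 0 ->
    deval env (dprol (dEqA e1 1 0)) p = 0 /\ deval env (dprol (dEqA e2 al 1)) p = 0.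

Lemma IsLieSym_LieSymCond rho1 rho2 H1 H2 g l V : SmoothVF V ->
  IsLieSym rho1 rho2 H1 H2 g l V <->
  LieSymCond (coefs V) (epsi rho1 rho2 g l rho1 H1) (epsi rho1 rho2 g l rho2 H2) (rho1 / rho2).
Proof.
  intros HV. unfold IsLieSym, LieSymCond, Eq1, Eq2.
  split; intros H p; specialize (H p); rewrite !deval_dprol, !deval_dEqA in *; auto.
Qed.

(** * Evaluation at sparse jet points *)

Fixpoint lookup_jet (l : list (nat * MI * R)) (a : nat) (J : MI) : option R :=
  match l with
  | [] => None
  | (a', J', r) :: l' => if (Nat.eqb a a' && mi_eqb J J')%bool then Some r else lookup_jet l' a J
  end.

Fixpoint subst_jet (s : nat -> MI -> option R) (e : dexp) : dexp :=
  match e with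
  | DJet a J => match s a J with None => DZero | Some r => DConst r end
  | DAdd e1 e2 => dadd (subst_jet s e1) (subst_jet s e2)
  | DMul e1 e2 => dmul (subst_jet s e1) (subst_jet s e2)
  | _ => e
  end.

Definition jet_point (t x y : R) (s : nat -> MI -> option R) : JP :=
  mkJP (fun j => match j with 0 => t | 1 => x | _ => y end%nat)
       (fun a J => match s a J with None => 0 | Some r => r end).

Lemma deval_subst_jet env s e t x y :
  deval env (subst_jet s e) (jet_point t x y s) = deval env e (jet_point t x y s).
Proof.
  induction e; simpl; auto.
  - destruct (s a J); reflexivity.
  - rewrite deval_dadd; simpl; congruence.
  - rewrite deval_dmul; simpl; congruence.
Qed.

Lemma LieSymCond_at env e1 e2 al l t x y : LieSymCond env e1 e2 al ->
  let s := lookup_jet l in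
  deval env (subst_jet s (dEqA e1 1 0)) (jet_point t x y s) = 0 ->
  deval env (subst_jet s (dEqA e2 al 1)) (jet_point t x y s) = 0 ->
  deval env (subst_jet s (dprol (dEqA e1 1 0))) (jet_point t x y s) = 0 /\
  deval env (subst_jet s (dprol (dEqA e2 al 1))) (jet_point t x y s) = 0.
Proof. intros HS s H1 H2. rewrite !deval_subst_jet in *. apply HS; auto. Qed.

(* [jetval a n0 n1 n2 r]: the coordinate d_t^n0 d_x^n1 d_y^n2 psi_(a+1) is r. *)
Definition jetval (a n0 n1 n2 : nat) (r : R) : nat * MI * R := (a, (n0, n1, n2), r).

(* Substituting numbers for the jet coordinates and normalising by
   [vm_compute] turns the expressions into polynomials in the derivatives
   of the components of V. *)
Ltac subst_jet_compute :=
  repeat match goal with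
  | |- context [subst_jet ?s ?e] =>
      let X := fresh "X" in remember (subst_jet s e) as X eqn:HX; vm_compute in HX; subst X
  end; cbn [deval jet_point jb ju lookup_jet mi_eqb Nat.eqb andb mi_add jetval].

Ltac subst_jet_compute_in H :=
  repeat match type of H with
  | context [subst_jet ?s ?e] =>
      let X := fresh "X" in remember (subst_jet s e) as X eqn:HX in H; vm_compute in HX; subst X
  end; cbn [deval jet_point jb ju lookup_jet mi_eqb Nat.eqb andb mi_add jetval] in H.

(* Adds the two conclusions of the criterion at the jet point with
   psi1 = u, psi2 = v and the further coordinates [l]; the point must lie on
   the solution variety. *)
Tactic Notation "criterion" constr(HS) constr(t) constr(x) constr(y) constr(u) constr(v)
    uconstr(l) :=
  let H1 := fresh "H" in let H2 := fresh "H" in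
  destruct (LieSymCond_at _ _ _ _ (jetval 0 0 0 0 u :: jetval 1 0 0 0 v :: l) t x y HS)
    as [H1 H2];
  [ subst_jet_compute; ring | subst_jet_compute; ring
  | subst_jet_compute_in H1; subst_jet_compute_in H2 ].

(** * The determining equations *)

Section LieSymmetries.
Variable V : VF.
Variables e1 e2 al : R.
Hypothesis HS : LieSymCond (coefs V) e1 e2 al.

(* Components 0..4 are xi_t, xi_x, xi_y, eta1, eta2; coordinates 0..4 are
   t, x, y, psi1, psi2. *)
Definition dd (c : nat) (K : list nat) : R5fun := Dks K (coefs V c).

Lemma det_xit_x t x y u v :
  dd 0 [1]%nat t x y u v = 0.
Proof.
  criterion HS t x y u v [].
  criterion HS t x y u v [jetval 0 2 1 0 1].
  unfold dd; lra.
Qed.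

Lemma det_xit_y t x y u v :
  dd 0 [2]%nat t x y u v = 0.
Proof.
  criterion HS t x y u v [].
  criterion HS t x y u v [jetval 0 2 0 1 1].
  unfold dd; lra.
Qed.

Lemma det_xit_u t x y u v :
  dd 0 [3]%nat t x y u v = 0.
Proof.
  criterion HS t x y u v [].
  criterion HS t x y u v [jetval 0 1 0 1 1].
  criterion HS t x y u v [jetval 0 1 0 1 (-1)].
  unfold dd; lra.
Qed.

Lemma det_xit_v t x y u v :
  dd 0 [4]%nat t x y u v = 0.
Proof.
  criterion HS t x y u v [].
  criterion HS t x y u v [jetval 1 1 1 0 1].
  criterion HS t x y u v [jetval 1 1 1 0 (-1)].
  unfold dd; lra.
Qed.

Lemma det_xix_v t x y u v :
  dd 1 [4]%nat t x y u v = 0.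
Proof.
  criterion HS t x y u v [jetval 0 0 1 0 1].
  criterion HS t x y u v [jetval 0 0 1 0 1; jetval 1 0 0 3 1].
  criterion HS t x y u v [jetval 0 0 1 0 (-1)].
  criterion HS t x y u v [jetval 0 0 1 0 (-1); jetval 1 0 0 3 1].
  unfold dd; lra.
Qed.

Lemma det_xiy_v t x y u v :
  dd 2 [4]%nat t x y u v = 0.
Proof.
  criterion HS t x y u v [].
  criterion HS t x y u v [jetval 1 0 2 0 1].
  criterion HS t x y u v [jetval 1 1 0 1 1].
  criterion HS t x y u v [jetval 1 0 2 0 1; jetval 1 1 0 1 1].
  unfold dd; lra.
Qed.

Lemma det_eta1_v t x y u v :
  dd 3 [4]%nat t x y u v = 0.
Proof.
  criterion HS t x y u v [jetval 0 0 1 0 1].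
  criterion HS t x y u v [jetval 0 0 1 0 1; jetval 1 0 0 3 1].
  criterion HS t x y u v [jetval 0 0 1 0 (-1)].
  criterion HS t x y u v [jetval 0 0 1 0 (-1); jetval 1 0 0 3 1].
  unfold dd; lra.
Qed.

Lemma det_eta2_u t x y u v :
  dd 4 [3]%nat t x y u v = 0.
Proof.
  criterion HS t x y u v [].
  criterion HS t x y u v [jetval 0 0 3 0 1].
  criterion HS t x y u v [jetval 0 0 0 1 1].
  criterion HS t x y u v [jetval 0 0 0 1 1; jetval 0 0 3 0 1; jetval 0 1 2 0 (-1)].
  criterion HS t x y u v [jetval 0 0 0 1 (-1)].
  criterion HS t x y u v [jetval 0 0 0 1 (-1); jetval 0 0 3 0 1; jetval 0 1 2 0 1].
  unfold dd; lra.
Qed.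

Lemma det_xix_u t x y u v :
  dd 1 [3]%nat t x y u v = - dd 0 [2]%nat t x y u v.
Proof.
  criterion HS t x y u v [].
  criterion HS t x y u v [jetval 0 0 2 1 1].
  criterion HS t x y u v [jetval 0 0 1 0 1].
  criterion HS t x y u v [jetval 0 0 1 0 1; jetval 0 0 2 1 1; jetval 0 1 2 0 1].
  criterion HS t x y u v [jetval 0 0 1 0 (-1)].
  criterion HS t x y u v [jetval 0 0 1 0 (-1); jetval 0 0 2 1 1; jetval 0 1 2 0 (-1)].
  unfold dd; lra.
Qed.

Lemma det_xiy_u t x y u v :
  dd 2 [3]%nat t x y u v = 3 * dd 0 [1]%nat t x y u v.
Proof.
  criterion HS t x y u v [].
  criterion HS t x y u v [jetval 0 0 3 0 1].
  criterion HS t x y u v [jetval 0 0 0 1 1].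
  criterion HS t x y u v [jetval 0 0 0 1 1; jetval 0 0 3 0 1; jetval 0 1 2 0 (-1)].
  criterion HS t x y u v [jetval 0 0 0 1 (-1)].
  criterion HS t x y u v [jetval 0 0 0 1 (-1); jetval 0 0 3 0 1; jetval 0 1 2 0 1].
  unfold dd; lra.
Qed.

Lemma det_xiy_x t x y u v :
  dd 2 [1]%nat t x y u v = - dd 1 [2]%nat t x y u v.
Proof.
  criterion HS t x y u v [].
  criterion HS t x y u v [jetval 0 1 1 1 1].
  unfold dd; lra.
Qed.

Lemma det_xiy_y t x y u v :
  dd 2 [2]%nat t x y u v = dd 1 [1]%nat t x y u v.
Proof.
  criterion HS t x y u v [].
  criterion HS t x y u v [jetval 0 1 0 2 1; jetval 0 1 2 0 (-1)].
  unfold dd; lra.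
Qed.

Lemma det_eta1_u t x y u v :
  dd 3 [3]%nat t x y u v = dd 1 [1]%nat t x y u v + dd 2 [2]%nat t x y u v
    - dd 0 [0]%nat t x y u v.
Proof.
  criterion HS t x y u v [].
  criterion HS t x y u v [jetval 0 0 2 1 1].
  criterion HS t x y u v [jetval 0 0 1 0 1].
  criterion HS t x y u v [jetval 0 0 1 0 1; jetval 0 0 2 1 1; jetval 0 1 2 0 1].
  criterion HS t x y u v [jetval 0 0 1 0 (-1)].
  criterion HS t x y u v [jetval 0 0 1 0 (-1); jetval 0 0 2 1 1; jetval 0 1 2 0 (-1)].
  unfold dd; lra.
Qed.

Lemma det_eta2_v t x y u v :
  dd 4 [4]%nat t x y u v = dd 1 [1]%nat t x y u v + dd 2 [2]%nat t x y u v
    - dd 0 [0]%nat t x y u v.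
Proof.
  criterion HS t x y u v [].
  criterion HS t x y u v [jetval 1 0 2 1 1].
  criterion HS t x y u v [jetval 1 0 1 0 1].
  criterion HS t x y u v [jetval 1 0 1 0 1; jetval 1 0 2 1 1; jetval 1 1 2 0 1].
  criterion HS t x y u v [jetval 1 0 1 0 (-1)].
  criterion HS t x y u v [jetval 1 0 1 0 (-1); jetval 1 0 2 1 1; jetval 1 1 2 0 (-1)].
  unfold dd; lra.
Qed.

Lemma det_eta1_y t x y u v :
  dd 3 [2]%nat t x y u v = dd 1 [0]%nat t x y u v.
Proof.
  criterion HS t x y u v [].
  criterion HS t x y u v [jetval 0 0 3 0 1].
  criterion HS t x y u v [jetval 0 0 0 1 1].
  criterion HS t x y u v [jetval 0 0 0 1 1; jetval 0 0 3 0 1; jetval 0 1 2 0 (-1)].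
  criterion HS t x y u v [jetval 0 0 0 1 (-1)].
  criterion HS t x y u v [jetval 0 0 0 1 (-1); jetval 0 0 3 0 1; jetval 0 1 2 0 1].
  unfold dd; lra.
Qed.

Lemma det_eta1_x t x y u v :
  dd 3 [1]%nat t x y u v = - dd 2 [0]%nat t x y u v.
Proof.
  criterion HS t x y u v [].
  criterion HS t x y u v [jetval 0 0 2 1 1].
  criterion HS t x y u v [jetval 0 0 1 0 1].
  criterion HS t x y u v [jetval 0 0 1 0 1; jetval 0 0 2 1 1; jetval 0 1 2 0 1].
  criterion HS t x y u v [jetval 0 0 1 0 (-1)].
  criterion HS t x y u v [jetval 0 0 1 0 (-1); jetval 0 0 2 1 1; jetval 0 1 2 0 (-1)].
  unfold dd; lra.
Qed.

Lemma det_eta2_y t x y u v :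
  dd 4 [2]%nat t x y u v = dd 1 [0]%nat t x y u v.
Proof.
  criterion HS t x y u v [].
  criterion HS t x y u v [jetval 1 0 3 0 1].
  unfold dd; lra.
Qed.

Lemma det_eta2_x t x y u v :
  dd 4 [1]%nat t x y u v = - dd 2 [0]%nat t x y u v.
Proof.
  criterion HS t x y u v [].
  criterion HS t x y u v [jetval 1 0 2 1 1].
  criterion HS t x y u v [jetval 1 0 1 0 1].
  criterion HS t x y u v [jetval 1 0 1 0 1; jetval 1 0 2 1 1; jetval 1 1 2 0 1].
  criterion HS t x y u v [jetval 1 0 1 0 (-1)].
  criterion HS t x y u v [jetval 1 0 1 0 (-1); jetval 1 0 2 1 1; jetval 1 1 2 0 (-1)].
  unfold dd; lra.
Qed.

Lemma det_xix_x t x y u v :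
  dd 3 [4;1;1]%nat t x y u v - dd 3 [3]%nat t x y u v * e1
    - dd 3 [4]%nat t x y u v * e2 + 2 * dd 1 [1]%nat t x y u v * e1
    + dd 3 [4;2;2]%nat t x y u v - dd 3 [4]%nat t x y u v * e1
    + dd 4 [4]%nat t x y u v * e1 = 0.
Proof.
  criterion HS t x y u v [].
  criterion HS t x y u v [jetval 1 1 0 0 1; jetval 0 1 2 0 (-e1); jetval 1 1 2 0 (-e2)].
  unfold dd; lra.
Qed.

Lemma det_xix_t_1 t x y u v :
  dd 3 [0;3;1]%nat t x y u v + dd 3 [0;1;3]%nat t x y u v - dd 1 [0;1;1]%nat t x y u v
    - dd 3 [1;1;2]%nat t x y u v - dd 4 [2]%nat t x y u v * e1
    - dd 1 [0;2;2]%nat t x y u v - dd 3 [2;2;2]%nat t x y u v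
    + dd 1 [0]%nat t x y u v * e1 = 0.
Proof.
  criterion HS t x y u v [].
  criterion HS t x y u v [jetval 0 0 1 0 1].
  criterion HS t x y u v [jetval 0 0 1 0 (-1)].
  criterion HS t x y u v [jetval 0 0 1 0 2].
  criterion HS t x y u v [jetval 0 0 1 0 (-2)].
  unfold dd; lra.
Qed.

Lemma det_xix_t_2 t x y u v :
  dd 4 [0;4;1]%nat t x y u v + dd 4 [0;1;4]%nat t x y u v - dd 1 [0;1;1]%nat t x y u v
    - dd 4 [1;1;2]%nat t x y u v + dd 3 [2]%nat t x y u v * al * e2
    - dd 4 [2;2;2]%nat t x y u v - dd 1 [0;2;2]%nat t x y u v
    - dd 1 [0]%nat t x y u v * e2 = 0.
Proof.
  criterion HS t x y u v [].
  criterion HS t x y u v [jetval 1 0 1 0 1].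
  criterion HS t x y u v [jetval 1 0 1 0 (-1)].
  criterion HS t x y u v [jetval 1 0 1 0 2].
  criterion HS t x y u v [jetval 1 0 1 0 (-2)].
  unfold dd; lra.
Qed.

Lemma det_xiy_t_1 t x y u v :
  - dd 2 [0;1;1]%nat t x y u v + dd 3 [1;1;1]%nat t x y u v
    + dd 4 [1]%nat t x y u v * e1 + dd 3 [0;3;2]%nat t x y u v
    + dd 3 [0;2;3]%nat t x y u v - dd 2 [0;2;2]%nat t x y u v
    + dd 2 [0]%nat t x y u v * e1 + dd 3 [1;2;2]%nat t x y u v = 0.
Proof.
  criterion HS t x y u v [].
  criterion HS t x y u v [jetval 0 0 0 1 1].
  criterion HS t x y u v [jetval 0 0 0 1 (-1)].
  criterion HS t x y u v [jetval 0 0 0 1 2].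
  criterion HS t x y u v [jetval 0 0 0 1 (-2)].
  unfold dd; lra.
Qed.

Lemma det_xiy_t_2 t x y u v :
  - dd 2 [0;1;1]%nat t x y u v - dd 3 [1]%nat t x y u v * al * e2
    + dd 4 [1;1;1]%nat t x y u v + dd 4 [0;4;2]%nat t x y u v
    + dd 4 [0;2;4]%nat t x y u v - dd 2 [0;2;2]%nat t x y u v
    - dd 2 [0]%nat t x y u v * e2 + dd 4 [1;2;2]%nat t x y u v = 0.
Proof.
  criterion HS t x y u v [].
  criterion HS t x y u v [jetval 1 0 0 1 1].
  criterion HS t x y u v [jetval 1 0 0 1 (-1)].
  criterion HS t x y u v [jetval 1 0 0 1 2].
  criterion HS t x y u v [jetval 1 0 0 1 (-2)].
  unfold dd; lra.
Qed.

Lemma det_eta_t_1 t x y u v :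
  dd 3 [0;1;1]%nat t x y u v + dd 3 [0;2;2]%nat t x y u v - dd 3 [0]%nat t x y u v * e1
    + dd 4 [0]%nat t x y u v * e1 = 0.
Proof.
  criterion HS t x y u v [].
  unfold dd; lra.
Qed.

Lemma det_eta_t_2 t x y u v :
  dd 4 [0;1;1]%nat t x y u v + dd 4 [0;2;2]%nat t x y u v
    - dd 3 [0]%nat t x y u v * al * e2 + dd 4 [0]%nat t x y u v * e2 = 0.
Proof.
  criterion HS t x y u v [].
  unfold dd; lra.
Qed.

(** * Solving the determining equations *)

Lemma dd_cons_eq {c c' K K'} k : dd c K = dd c' K' -> dd c (k :: K) = dd c' (k :: K').
Proof. intro H. unfold dd in *. cbn [Dks]. rewrite H. reflexivity. Qed.

Lemma dd_cons_c0 {c K} k : dd c K = c0 -> dd c (k :: K) = c0.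
Proof. intro H. unfold dd in *. cbn [Dks]. rewrite H. apply Dk_c0. Qed.

Lemma dd_independent c k K : independent k (dd c K) -> dd c (k :: K) = c0.
Proof. apply Dk_independent. Qed.

Hypothesis HV : SmoothVF V.

Lemma independent_coef c k : (k < 5)%nat -> dd c [k] = c0 -> independent k (coefs V c).
Proof. apply independent_of_Dk, smooth_env_coefs, HV. Qed.

Lemma xit_independent k : (1 <= k < 5)%nat -> independent k (coefs V 0).
Proof.
  intros Hk. apply independent_coef; [lia|apply R5fun_ext].
  destruct k as [|[|[|[|[|k]]]]]; try lia.
  - exact det_xit_x.
  - exact det_xit_y.
  - exact det_xit_u.
  - exact det_xit_v.
Qed.

Lemma xix_independent_u : independent 3 (coefs V 1).
Proof.
  apply independent_coef; [lia|apply R5fun_ext]. intros.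
  rewrite det_xix_u, det_xit_y. unfold c0. ring.
Qed.

Lemma xix_independent_v : independent 4 (coefs V 1).
Proof. apply independent_coef; [lia|apply R5fun_ext, det_xix_v]. Qed.

Lemma xiy_independent_u : independent 3 (coefs V 2).
Proof.
  apply independent_coef; [lia|apply R5fun_ext]. intros.
  rewrite det_xiy_u, det_xit_x. unfold c0. ring.
Qed.

Lemma xiy_independent_v : independent 4 (coefs V 2).
Proof. apply independent_coef; [lia|apply R5fun_ext, det_xiy_v]. Qed.

Lemma eta1_independent_v : independent 4 (coefs V 3).
Proof. apply independent_coef; [lia|apply R5fun_ext, det_eta1_v]. Qed.

Lemma eta2_x_eq : dd 4 [1]%nat = dd 3 [1]%nat.
Proof. apply R5fun_ext. intros. rewrite det_eta2_x, det_eta1_x. reflexivity. Qed.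

Lemma eta2_y_eq : dd 4 [2]%nat = dd 3 [2]%nat.
Proof. apply R5fun_ext. intros. rewrite det_eta2_y, det_eta1_y. reflexivity. Qed.

Lemma eta2_v_eq : dd 4 [4]%nat = dd 3 [3]%nat.
Proof. apply R5fun_ext. intros. rewrite det_eta2_v, det_eta1_u. reflexivity. Qed.

Lemma eta1_x_independent_u : independent 3 (dd 3 [1]%nat).
Proof.
  apply (independent_scale _ (dd 2 [0]%nat) _ (-1)); [intros; rewrite det_eta1_x; ring|].
  apply independent_Dk, xiy_independent_u.
Qed.

Lemma eta2_x_independent_v : independent 4 (dd 4 [1]%nat).
Proof.
  apply (independent_scale _ (dd 2 [0]%nat) _ (-1)); [intros; rewrite det_eta2_x; ring|].
  apply independent_Dk, xiy_independent_v.
Qed.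

Lemma eta1_y_independent_u : independent 3 (dd 3 [2]%nat).
Proof.
  apply (independent_scale _ (dd 1 [0]%nat) _ 1); [intros; rewrite det_eta1_y; ring|].
  apply independent_Dk, xix_independent_u.
Qed.

Lemma eta2_y_independent_v : independent 4 (dd 4 [2]%nat).
Proof.
  apply (independent_scale _ (dd 1 [0]%nat) _ 1); [intros; rewrite det_eta2_y; ring|].
  apply independent_Dk, xix_independent_v.
Qed.

Hypothesis He1 : e1 <> 0.
Hypothesis He2 : e2 <> 0.
Hypothesis Hal : al <> 1.

Let He2al : e2 * (al - 1) <> 0.
Proof. apply Rmult_integral_contrapositive_currified; [exact He2|]. intro; apply Hal; lra. Qed.

Lemma xix_t_zero : dd 1 [0]%nat = c0.
Proof.
  apply R5fun_ext. intros t x y u v.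
  pose proof (det_xix_t_1 t x y u v) as E1. pose proof (det_xix_t_2 t x y u v) as E2.
  rewrite det_eta2_y in E1. rewrite det_eta1_y in E2.
  rewrite (dd_cons_eq 1 (dd_cons_eq 1 eta2_y_eq)), (dd_cons_eq 2 (dd_cons_eq 2 eta2_y_eq)),
    (dd_cons_eq 0 (dd_cons_eq 1 eta2_v_eq)),
    (dd_cons_c0 0 (dd_independent _ _ _ eta2_x_independent_v)) in E2.
  rewrite (dd_cons_c0 0 (dd_independent _ _ _ eta1_x_independent_u)) in E1.
  apply (Rmult_eq_reg_r (e2 * (al - 1))); [unfold c0 in *; lra | exact He2al].
Qed.

Lemma xiy_t_zero : dd 2 [0]%nat = c0.
Proof.
  apply R5fun_ext. intros t x y u v.
  pose proof (det_xiy_t_1 t x y u v) as E1. pose proof (det_xiy_t_2 t x y u v) as E2.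
  rewrite det_eta2_x in E1. rewrite det_eta1_x in E2.
  rewrite (dd_cons_eq 1 (dd_cons_eq 1 eta2_x_eq)), (dd_cons_eq 1 (dd_cons_eq 2 eta2_y_eq)),
    (dd_cons_eq 0 (dd_cons_eq 2 eta2_v_eq)),
    (dd_cons_c0 0 (dd_independent _ _ _ eta2_y_independent_v)) in E2.
  rewrite (dd_cons_c0 0 (dd_independent _ _ _ eta1_y_independent_u)) in E1.
  apply (Rmult_eq_reg_r (e2 * (al - 1))); [unfold c0 in *; lra | exact He2al].
Qed.

Lemma xix_x_zero : dd 1 [1]%nat = c0.
Proof.
  apply R5fun_ext. intros t x y u v.
  pose proof (det_xix_x t x y u v) as E.
  pose proof (independent_Dks _ _ [1;1]%nat eta1_independent_v) as I11.
  pose proof (independent_Dks _ _ [2;2]%nat eta1_independent_v) as I22.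
  rewrite (dd_independent 3 4 [1;1]%nat I11), (dd_independent 3 4 [2;2]%nat I22),
    det_eta1_v, eta2_v_eq in E.
  apply (Rmult_eq_reg_r (2 * e1)); [unfold c0 in *; lra|].
  apply Rmult_integral_contrapositive_currified; [lra | exact He1].
Qed.

Lemma xiy_y_zero : dd 2 [2]%nat = c0.
Proof. apply R5fun_ext. intros. rewrite det_xiy_y, xix_x_zero. reflexivity. Qed.

Lemma eta1_x_zero : dd 3 [1]%nat = c0.
Proof. apply R5fun_ext. intros. rewrite det_eta1_x, xiy_t_zero. unfold c0. ring. Qed.

Lemma eta1_y_zero : dd 3 [2]%nat = c0.
Proof. apply R5fun_ext. intros. rewrite det_eta1_y, xix_t_zero. reflexivity. Qed.

Lemma eta2_x_zero : dd 4 [1]%nat = c0.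
Proof. rewrite eta2_x_eq. exact eta1_x_zero. Qed.

Lemma eta2_y_zero : dd 4 [2]%nat = c0.
Proof. rewrite eta2_y_eq. exact eta1_y_zero. Qed.

Lemma eta2_t_eq : dd 4 [0]%nat = dd 3 [0]%nat.
Proof.
  apply R5fun_ext. intros t x y u v.
  pose proof (det_eta_t_1 t x y u v) as E.
  rewrite (dd_cons_c0 0 (dd_cons_c0 1 eta1_x_zero)),
    (dd_cons_c0 0 (dd_cons_c0 2 eta1_y_zero)) in E.
  apply (Rmult_eq_reg_r e1); [unfold c0 in *; lra | exact He1].
Qed.

Lemma eta1_t_zero : dd 3 [0]%nat = c0.
Proof.
  apply R5fun_ext. intros t x y u v.
  pose proof (det_eta_t_2 t x y u v) as E.
  rewrite (dd_cons_c0 0 (dd_cons_c0 1 eta2_x_zero)),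
    (dd_cons_c0 0 (dd_cons_c0 2 eta2_y_zero)), eta2_t_eq in E.
  apply (Rmult_eq_reg_r (e2 * (al - 1))); [unfold c0 in *; lra | exact He2al].
Qed.

Lemma eta2_t_zero : dd 4 [0]%nat = c0.
Proof. rewrite eta2_t_eq. exact eta1_t_zero. Qed.

Definition dilation_rate : R := dd 0 [0]%nat 0 0 0 0 0.
Definition rotation_rate : R := dd 1 [2]%nat 0 0 0 0 0.

Lemma xit_t_const : dd 0 [0]%nat = (fun _ _ _ _ _ => dilation_rate).
Proof.
  apply R5fun_ext, independent_all_const. intros k Hk.
  destruct (Nat.eq_dec k 0) as [->|Hk0].
  - apply (independent_scale _ (dd 3 [3]%nat) _ (-1)).
    + intros. rewrite det_eta1_u, xix_x_zero, xiy_y_zero. unfold c0. ring.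
    + apply independent_Dk, independent_coef, eta1_t_zero. lia.
  - apply independent_Dk, xit_independent. lia.
Qed.

Lemma xix_y_const : dd 1 [2]%nat = (fun _ _ _ _ _ => rotation_rate).
Proof.
  apply R5fun_ext, independent_all_const. intros k Hk.
  destruct (Nat.eq_dec k 2) as [->|Hk2].
  - apply (independent_scale _ (dd 2 [1]%nat) _ (-1)).
    + intros. rewrite det_xiy_x. ring.
    + apply independent_Dk, independent_coef, xiy_y_zero. lia.
  - apply independent_Dk.
    destruct k as [|[|[|[|[|k]]]]]; try lia.
    + apply independent_coef, xix_t_zero. lia.
    + apply independent_coef, xix_x_zero. lia.
    + exact xix_independent_u.
    + exact xix_independent_v.
Qed.

Lemma xiy_x_const : dd 2 [1]%nat = (fun _ _ _ _ _ => - rotation_rate).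
Proof. apply R5fun_ext. intros. rewrite det_xiy_x, xix_y_const. reflexivity. Qed.

Lemma eta1_u_const : dd 3 [3]%nat = (fun _ _ _ _ _ => - dilation_rate).
Proof.
  apply R5fun_ext. intros. rewrite det_eta1_u, xix_x_zero, xiy_y_zero, xit_t_const.
  unfold c0. ring.
Qed.

Lemma eta2_v_const : dd 4 [4]%nat = (fun _ _ _ _ _ => - dilation_rate).
Proof. rewrite eta2_v_eq. exact eta1_u_const. Qed.

Lemma LieSymCond_InSpanX : InSpanX V.
Proof.
  pose proof (smooth_env_coefs V HV) as Hs.
  pose proof (affine_of_const_Dk (coefs V 0) dilation_rate 0 0 0 0 (Hs 0%nat) xit_t_const
    (R5fun_ext _ _ det_xit_x) (R5fun_ext _ _ det_xit_y)
    (R5fun_ext _ _ det_xit_u) (R5fun_ext _ _ det_xit_v)) as At.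
  pose proof (affine_of_const_Dk (coefs V 1) 0 0 rotation_rate 0 0 (Hs 1%nat)
    xix_t_zero xix_x_zero xix_y_const
    (Dk_independent _ _ xix_independent_u) (Dk_independent _ _ xix_independent_v)) as Ax.
  pose proof (affine_of_const_Dk (coefs V 2) 0 (- rotation_rate) 0 0 0 (Hs 2%nat)
    xiy_t_zero xiy_x_const xiy_y_zero
    (Dk_independent _ _ xiy_independent_u) (Dk_independent _ _ xiy_independent_v)) as Ay.
  pose proof (affine_of_const_Dk (coefs V 3) 0 0 0 (- dilation_rate) 0 (Hs 3%nat)
    eta1_t_zero eta1_x_zero eta1_y_zero eta1_u_const
    (Dk_independent _ _ eta1_independent_v)) as Au.
  pose proof (affine_of_const_Dk (coefs V 4) 0 0 0 0 (- dilation_rate) (Hs 4%nat)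
    eta2_t_zero eta2_x_zero eta2_y_zero (R5fun_ext _ _ det_eta2_u) eta2_v_const) as Av.
  exists [coefs V 1 0 0 0 0 0; coefs V 2 0 0 0 0 0; coefs V 0 0 0 0 0 0;
          coefs V 3 0 0 0 0 0; coefs V 4 0 0 0 0 0; rotation_rate; dilation_rate].
  split; [reflexivity|]. intros t x y p1 p2.
  cbn -[rotation_rate dilation_rate] in At, Ax, Ay, Au, Av |- *.
  rewrite (At t x y p1 p2), (Ax t x y p1 p2), (Ay t x y p1 p2), (Au t x y p1 p2), (Av t x y p1 p2).
  unfold c0, Defs.c1. repeat split; ring.
Qed.

End LieSymmetries.

(** * The seven generators are symmetries *)

Definition affine_fun (a0 a1 a2 a3 a4 a5 : R) : R5fun :=
  fun t x y u v => a0 + a1 * t + a2 * x + a3 * y + a4 * u + a5 * v.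

Definition nth5 (k : nat) (a1 a2 a3 a4 a5 : R) : R :=
  match k with
  | 0%nat => a1 | 1%nat => a2 | 2%nat => a3 | 3%nat => a4 | 4%nat => a5 | _ => 0
  end.

Lemma Dk_affine_fun k a0 a1 a2 a3 a4 a5 :
  Dk k (affine_fun a0 a1 a2 a3 a4 a5) = affine_fun (nth5 k a1 a2 a3 a4 a5) 0 0 0 0 0.
Proof.
  destruct (Nat.ltb_spec k 5) as [Hk|Hk].
  - apply R5fun_ext. intros t x y u v.
    change (lift5 (Dk k (affine_fun a0 a1 a2 a3 a4 a5)) (vec5 t x y u v) =
            nth5 k a1 a2 a3 a4 a5 + 0 * t + 0 * x + 0 * y + 0 * u + 0 * v).
    rewrite lift5_Dk by auto. unfold PDv.
    rewrite dlim_eq with (l := nth5 k a1 a2 a3 a4 a5); [ring|].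
    destruct k as [|[|[|[|[|k]]]]]; try lia;
      apply derivable_pt_lim_affine; intro s; unfold lift5, upd, affine_fun; simpl; ring.
  - rewrite Dk_ge5 by lia.
    apply R5fun_ext. intros. destruct k as [|[|[|[|[|k]]]]]; try lia.
    unfold c0, affine_fun, nth5. ring.
Qed.

Lemma Dks_affine_fun K a0 a1 a2 a3 a4 a5 :
  exists b0 b1 b2 b3 b4 b5, Dks K (affine_fun a0 a1 a2 a3 a4 a5) = affine_fun b0 b1 b2 b3 b4 b5.
Proof.
  induction K as [|k K (b0 & b1 & b2 & b3 & b4 & b5 & IH)]; simpl.
  - do 6 eexists. reflexivity.
  - rewrite IH, Dk_affine_fun. do 6 eexists. reflexivity.
Qed.

Lemma Dks_affine_fun_2 k1 k2 K a0 a1 a2 a3 a4 a5 :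
  Dks (k1 :: k2 :: K) (affine_fun a0 a1 a2 a3 a4 a5) = affine_fun 0 0 0 0 0 0.
Proof.
  destruct (Dks_affine_fun K a0 a1 a2 a3 a4 a5) as (b0 & b1 & b2 & b3 & b4 & b5 & E).
  simpl. rewrite E, !Dk_affine_fun. destruct k1 as [|[|[|[|[|k1]]]]]; reflexivity.
Qed.

Fixpoint subst_coef (rho : nat -> list nat -> option dexp) (e : dexp) : dexp :=
  match e with
  | DCoef c K => match rho c K with Some e' => e' | None => e end
  | DAdd e1 e2 => dadd (subst_coef rho e1) (subst_coef rho e2)
  | DMul e1 e2 => dmul (subst_coef rho e1) (subst_coef rho e2)
  | _ => e
  end.

Lemma deval_subst_coef env rho e p :
  (forall c K e', rho c K = Some e' -> deval env e' p = deval env (DCoef c K) p) ->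
  deval env (subst_coef rho e) p = deval env e p.
Proof.
  intros H. induction e; simpl; auto.
  - destruct (rho c K) eqn:E; [apply H; auto | reflexivity].
  - rewrite deval_dadd; simpl; congruence.
  - rewrite deval_dmul; simpl; congruence.
Qed.

Section AffineFields.
Variables k1 k2 k3 k4 k5 k6 k7 : R.

(* The components of k1 X1 + ... + k7 X7. *)
Definition affine_env (c : nat) : R5fun :=
  match c with
  | 0 => affine_fun k3 k7 0 0 0 0
  | 1 => affine_fun k1 0 0 k6 0 0
  | 2 => affine_fun k2 0 (-k6) 0 0 0
  | 3 => affine_fun k4 0 0 0 (-k7) 0
  | 4 => affine_fun k5 0 0 0 0 (-k7)
  | _ => affine_fun 0 0 0 0 0 0
  end%nat.

Definition affine_first_derivative (c k : nat) : option R :=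
  match c, k with
  | 0, 0 => Some k7
  | 1, 2 => Some k6
  | 2, 1 => Some (-k6)
  | 3, 3 => Some (-k7)
  | 4, 4 => Some (-k7)
  | _, _ => None
  end%nat.

Definition affine_derivatives (c : nat) (K : list nat) : option dexp :=
  match K with
  | [] => None
  | [k] => Some (match affine_first_derivative c k with Some r => DConst r | None => DZero end)
  | _ => Some DZero
  end.

Lemma affine_derivatives_correct p c K e' : affine_derivatives c K = Some e' ->
  deval affine_env e' p = deval affine_env (DCoef c K) p.
Proof.
  destruct K as [|k [|k' K]]; intro H; [discriminate| |];
    cbn [affine_derivatives] in H; inversion H; subst; clear H; cbn [deval].
  - change (Dks [k] (affine_env c)) with (Dk k (affine_env c)).
    destruct c as [|[|[|[|[|c]]]]]; cbn [affine_env]; rewrite Dk_affine_fun;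
      destruct k as [|[|[|[|[|k]]]]]; cbn; unfold affine_fun; ring.
  - destruct c as [|[|[|[|[|c]]]]]; cbn [affine_env]; rewrite Dks_affine_fun_2;
      cbn; unfold affine_fun; ring.
Qed.

Lemma deval_dprol_affine e alpha a p : (a < 2)%nat ->
  deval affine_env (dprol (dEqA e alpha a)) p = -2 * k7 * deval affine_env (dEqA e alpha a) p.
Proof.
  intros Ha.
  rewrite <- (deval_subst_coef affine_env affine_derivatives)
    by (intros; apply affine_derivatives_correct; auto).
  destruct a as [|[|a]]; [| |lia];
  (let X := fresh "X" in
   remember (subst_coef affine_derivatives (dprol (dEqA e alpha _))) as X eqn:HX;
   vm_compute in HX; subst X);
  cbn [deval Dks]; unfold dEqA, domegaD; cbn [deval mi_add Nat.add]; ring.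
Qed.

End AffineFields.

Lemma IsLinComb_coefs V c : IsLinComb V c ->
  exists k1 k2 k3 k4 k5 k6 k7, coefs V = affine_env k1 k2 k3 k4 k5 k6 k7.
Proof.
  intros [Hlen H].
  destruct c as [|k1 [|k2 [|k3 [|k4 [|k5 [|k6 [|k7 [|k8 c]]]]]]]]; try discriminate.
  exists k1, k2, k3, k4, k5, k6, k7.
  extensionality c. apply R5fun_ext. intros t x y u v.
  destruct (H t x y u v) as (Et & Ex & Ey & Eu & Ev). cbn in Et, Ex, Ey, Eu, Ev.
  unfold c0, Defs.c1 in *.
  destruct c as [|[|[|[|[|c]]]]]; cbn [coefs affine_env]; unfold affine_fun.
  - rewrite Et; ring.
  - rewrite Ex; ring.
  - rewrite Ey; ring.
  - rewrite Eu; ring.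
  - rewrite Ev; ring.
  - unfold c0; ring.
Qed.

Lemma InSpanX_LieSymCond V e1 e2 al : InSpanX V -> LieSymCond (coefs V) e1 e2 al.
Proof.
  intros [c Hc] p H1 H2.
  destruct (IsLinComb_coefs V c Hc) as (k1 & k2 & k3 & k4 & k5 & k6 & k7 & E).
  rewrite E in *. rewrite !deval_dprol_affine, H1, H2 by lia. split; ring.
Qed.

Lemma Xs_lin_indep : XsLinIndep.
Proof.
  intros c [Hlen H].
  destruct c as [|k1 [|k2 [|k3 [|k4 [|k5 [|k6 [|k7 [|k8 c]]]]]]]]; try discriminate.
  destruct (H 0 0 0 0 0) as (T0 & X0 & Y0 & U0 & V0).
  destruct (H 1 1 1 1 1) as (T1 & X1 & Y1 & U1 & V1).
  cbn in *. unfold c0, Defs.c1 in *.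
  repeat constructor; lra.
Qed.

Lemma epsi_pos rho1 rho2 g l rhoi Hi : rho1 < rho2 -> 0 < g -> 0 < Hi -> 0 < rhoi -> l <> 0 ->
  0 < epsi rho1 rho2 g l rhoi Hi.
Proof.
  intros. unfold epsi, Rdiv. apply Rmult_lt_0_compat.
  - apply Rmult_lt_0_compat; [|lra]. rewrite <- Rsqr_pow2. apply Rsqr_pos_lt; auto.
  - apply Rinv_0_lt_compat. repeat apply Rmult_lt_0_compat; lra.
Qed.

Theorem mainTheorem1 (rho1 rho2 H1 H2 g l : R)
  (hrho1 : 0 < rho1) (hrho2 : 0 < rho2) (hrho : rho1 < rho2)
  (hH1 : 0 < H1) (hH2 : 0 < H2) (hg : 0 < g) (hl : l <> 0) :
  (forall V : VF, SmoothVF V ->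
     (IsLieSym rho1 rho2 H1 H2 g l V <-> InSpanX V))
  /\ XsLinIndep.
Proof.
  split; [|exact Xs_lin_indep].
  intros V HV. rewrite IsLieSym_LieSymCond by exact HV. split.
  - intros HS. apply (LieSymCond_InSpanX V _ _ _ HS HV).
    + apply Rgt_not_eq, epsi_pos; assumption.
    + apply Rgt_not_eq, epsi_pos; assumption.
    + intro E. assert (Hr : rho1 = rho1 / rho2 * rho2) by (field; lra).
      rewrite E in Hr. lra.
  - apply InSpanX_LieSymCond.
Qed.
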